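(* In the screening cohort model described in the context, for a screening policy $h\in\{S,NS\}^J$, the expected total number of life years left $T_h$ of the cohort, measured at the beginning, is $$ \mathbb{E} T_h = \sum_{j=2}^J 2N_j + \sum_{j=1}^J \left[\lambda_{j,-1}(1)\,\mu_{j,h}(-1) + \sum_{k=0}^K \mu_{j,h}(k)\,\mathbb{E} T_{j,k}\right]N_j, $$ where $\mathbb{E} T_{j,k} = \sum_{t=0}^\infty t\,\lambda_{j,k}(t)$.
   Context: Model of a cohort of women undergoing (biennial) breast cancer screening. Age groups (screening rounds, two years apart) are indexed by $j=1,\dots,J$. A policy is $h=[h(1),\dots,h(J)]\in\{S,NS\}^J$, where $h(j)=S$ means age group $j$ is screened and $NS$ means not screened. At round $j$, an individual's observed state is a random variable $X_{j,h}\in\{-1,0,1,\dots,K\}$, where $-1$ means no breast cancer diagnosed and $k=0,\dots,K$ are diagnosed cancer stages; its distribution $\mu_{j,h}(k)=P(X_{j,h}=k)$ depends only on $j$ and $h(j)$ (not on the individual). For an individual of age group $j$ in state $k$, the time to death (in years, a nonnegative integer) is $T_{j,k}$ with distribution $\lambda_{j,k}(t)=P(T_{j,k}=t)$, independent of the individual. $T_j$ denotes the time to death of an individual at age group $j$ regardless of state, with $P(T_j=t)=\sum_{k=-1}^K \lambda_{j,k}(t)\mu_{j,h}(k)$. Individuals leave the screening population when they die or are diagnosed with breast cancer. The cohort starts with $N_1=N_0$ individuals, and the number invited at round $j+1$ is $N_{j+1}=N_j\big(1-P(T_j\in\{0,1\})-P(T_j\ge 2, X_{j,h}\ne -1)\big)$.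 Life-year accounting: each individual present at round $j\ge 2$ contributes the two years lived between rounds $j-1$ and $j$; at round $j$, an undiagnosed individual (state $-1$) who lives only one more year contributes one year; an individual diagnosed at round $j$ in stage $k\ge 0$ contributes $T_{j,k}$ further years. $T_h$ denotes the total number of life years of the cohort counted in this way under policy $h$. *)

From HB Require Import structures.
From mathcomp Require Import all_boot all_order all_algebra.
From mathcomp Require Import all_classical all_reals all_analysis.
Set Implicit Arguments. Unset Strict Implicit. Unset Printing Implicit Defensive.
Import Order.TTheory GRing.Theory Num.Theory.
Local Open Scope ring_scope.

(* Observed state at a round: None = -1 (no cancer diagnosed),
   Some k = diagnosed stage k, k = 0..K. *)
Definition state (K : nat) := option 'I_K.+1.

(* A policy h : nat -> bool, h j = true means S (screened), false means NS.
   mu j b x = P(X_{j,h} = x) when h j = b.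
   lam j x t = P(T_{j,x} = t). *)
Section Model.
Variables (R : realType) (K : nat).
Variables (mu : nat -> bool -> state K -> R) (lam : nat -> state K -> nat -> R).
Variables (h : nat -> bool).

Definition P_T01 (j : nat) : R :=
  \sum_(x : state K) mu j (h j) x * (lam j x 0%N + lam j x 1%N).

Definition P_T2_diag (j : nat) : R :=
  fine (\sum_(k < K.+1) ((mu j (h j) (Some k))%:E *
          \sum_(2 <= t <oo) (lam j (Some k) t)%:E))%E.

(* cohortN N0 n = N_{n+1} *)
Fixpoint cohortN (N0 : R) (n : nat) : R :=
  match n with
  | 0%N => N0
  | n'.+1 => cohortN N0 n' * (1 - P_T01 n'.+1 - P_T2_diag n'.+1)
  end.

(* N_j, for j >= 1 *)
Definition N (N0 : R) (j : nat) : R := cohortN N0 j.-1.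

Definition ET (j : nat) (k : 'I_K.+1) : \bar R :=
  (\sum_(0 <= t <oo) ((t%:R * lam j (Some k) t)%:E))%E.

(* Life years contributed at round j by an individual present at round j,
   in state x, whose time to death is t. *)
Definition contrib (j : nat) (x : state K) (t : nat) : R :=
  (if (2 <= j)%N then 2 else 0) +
  match x with
  | None => if t == 1%N then 1 else 0
  | Some _ => t%:R
  end.

(* Expected total life years E T_h: each of the N_j individuals present
   at round j contributes contrib j X T in expectation, where
   P(X = x, T = t) = mu(x) lam_x(t). *)
Definition ET_h (N0 : R) (J : nat) : \bar R :=
  (\sum_(1 <= j < J.+1)
     (N N0 j)%:E *
     \sum_(x : state K) \sum_(0 <= t <oo)
        ((contrib j x t * (mu j (h j) x * lam j x t))%:E))%E.

End Model.

(* An individual present at round j, in state X and with time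
   to death T, contributes [contrib j X T] life years, and there are N_j such
   individuals.  Hence E T_h is the sum over j of N_j times the expectation of
   [contrib j X T] under the joint law mu_j(x) lam_{j,x}(t).  Since mu_j and
   every lam_{j,x} are probability distributions, the constant part (2 years
   for j >= 2) of that expectation integrates to itself, the undiagnosed state
   only charges t = 1, and a diagnosed state k charges E T_{j,k}. *)
From HB Require Import structures.
From mathcomp Require Import all_boot all_order all_algebra.
From mathcomp Require Import all_classical all_reals all_analysis.
Import Order.TTheory GRing.Theory Num.Theory.
Local Open Scope ring_scope.
Local Open Scope ereal_scope.

Lemma big_option (T : finType) (R : Type) (idx : R)
    (op : Monoid.com_law idx) (F : option T -> R) :
  \big[op/idx]_(x : option T) F x = op (F None) (\big[op/idx]_(t : T) F (Some t)).
Proof.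
rewrite (bigD1 None) //=; congr (op _ _).
rewrite (reindex_omap Some id) /=; last by case.
by apply: eq_bigl => t; rewrite eqxx.
Qed.

Lemma nneseries_indicator (R : realType) (n : nat) (g : nat -> R) :
  (forall t, (0 <= g t)%R) ->
  \sum_(0 <= t <oo) ((if t == n then 1 else 0) * g t)%:E = (g n)%:E.
Proof.
move=> g_ge0.
rewrite (@nneseriesD1 _ _ n) //; last first.
  by move=> t _; rewrite lee_fin; case: ifP; rewrite ?mul1r ?mul0r.
rewrite eqxx mul1r eseries0 ?adde0 // => t _ /negbTE ->.
by rewrite mul0r.
Qed.

Lemma nneseries_mean_addl (R : realType) (c : R) (f p : nat -> R) :
  (0 <= c)%R -> (forall t, 0 <= f t)%R -> (forall t, 0 <= p t)%R ->
  \sum_(0 <= t <oo) (p t)%:E = 1 ->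
  \sum_(0 <= t <oo) ((c + f t) * p t)%:E =
  c%:E + \sum_(0 <= t <oo) (f t * p t)%:E.
Proof.
move=> c_ge0 f_ge0 p_ge0 p_sum1.
under eq_eseriesr do rewrite mulrDl EFinD EFinM.
rewrite nneseriesD; last 2 first.
- by move=> t _ _; rewrite -EFinM lee_fin mulr_ge0.
- by move=> t _ _; rewrite lee_fin mulr_ge0.
by rewrite nneseriesZl ?p_sum1 ?mule1 // => t _; rewrite lee_fin.
Qed.

Section ExpectedContribution.
Variables (R : realType) (K : nat).
Variables (mu : nat -> bool -> state K -> R) (lam : nat -> state K -> nat -> R).

Definition years_from_round (x : state K) (t : nat) : R :=
  (match x with None => if t == 1%N then 1 else 0 | Some _ => t%:R end)%R.

Lemma contribE j x t :
  contrib R j x t = ((if (2 <= j)%N then 2 else 0) + years_from_round x t)%R.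
Proof. by []. Qed.

Lemma years_from_round_ge0 x t : (0 <= years_from_round x t)%R.
Proof. by case: x => [?|] /=; [|case: ifP]. Qed.

Lemma expected_contrib (j : nat) (b : bool) :
  (forall x, 0 <= mu j b x)%R -> (\sum_x mu j b x = 1)%R ->
  (forall x t, 0 <= lam j x t)%R ->
  (forall x, \sum_(0 <= t <oo) (lam j x t)%:E = 1) ->
  \sum_(x : state K) \sum_(0 <= t <oo) (contrib R j x t * (mu j b x * lam j x t))%:E
  = (if (2 <= j)%N then 2 else 0)%:E +
    ((lam j None 1%N * mu j b None)%:E +
     \sum_(k < K.+1) (mu j b (Some k))%:E * ET lam j k).
Proof.
move=> mu_ge0 mu_sum1 lam_ge0 lam_sum1.
set c : R := (if (2 <= j)%N then 2 else 0)%R.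
have c_ge0 : (0 <= c)%R by rewrite /c; case: ifP.
have per_state x :
    \sum_(0 <= t <oo) (contrib R j x t * (mu j b x * lam j x t))%:E =
    (c * mu j b x)%:E +
    (mu j b x)%:E * \sum_(0 <= t <oo) (years_from_round x t * lam j x t)%:E.
  under eq_eseriesr do rewrite mulrCA EFinM contribE -/c.
  rewrite nneseriesZl => [|t _]; last first.
    by rewrite lee_fin mulr_ge0 ?addr_ge0 ?years_from_round_ge0.
  rewrite nneseries_mean_addl //; last exact: years_from_round_ge0.
  by rewrite muleDr // -EFinM mulrC.
rewrite (eq_bigr _ (fun x _ => per_state x)) big_split /= sumEFin -mulr_sumr.
rewrite mu_sum1 mulr1 big_option; congr (_ + (_ + _)).
by rewrite (@nneseries_indicator _ 1%N (lam j None)) // -EFinM mulrC.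
Qed.

End ExpectedContribution.

Local Close Scope ereal_scope.

Theorem proposition1 (R : realType) (J K : nat)
  (mu : nat -> bool -> option 'I_K.+1 -> R)
  (lam : nat -> option 'I_K.+1 -> nat -> R)
  (h : nat -> bool) (N0 : R) :
  0 <= N0 ->
  (forall j b x, (1 <= j <= J)%N -> 0 <= mu j b x) ->
  (forall j b, (1 <= j <= J)%N -> \sum_(x : option 'I_K.+1) mu j b x = 1) ->
  (forall j x t, (1 <= j <= J)%N -> 0 <= lam j x t) ->
  (forall j x, (1 <= j <= J)%N ->
     (\sum_(0 <= t <oo) (lam j x t)%:E = 1%:E)%E) ->
  ET_h mu lam h N0 J =
  (\sum_(2 <= j < J.+1) (2 * N mu lam h N0 j)%:E +
   \sum_(1 <= j < J.+1)
     (((lam j None 1%N * mu j (h j) None)%:E +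
       \sum_(k < K.+1) (mu j (h j) (Some k))%:E * ET lam j k) *
      (N mu lam h N0 j)%:E))%E.
Proof.
move=> _ mu_ge0 mu_sum1 lam_ge0 lam_sum1.
rewrite /ET_h.
transitivity (\sum_(1 <= j < J.+1)
   ((N mu lam h N0 j * (if (2 <= j)%N then 2 else 0))%:E +
    ((lam j None 1%N * mu j (h j) None)%:E +
       \sum_(k < K.+1) (mu j (h j) (Some k))%:E * ET lam j k) *
      (N mu lam h N0 j)%:E))%E.
  apply: eq_big_nat => j /andP[j_ge1 j_leJ].
  have j_range : (1 <= j <= J)%N by rewrite j_ge1 -ltnS.
  rewrite expected_contrib; first by rewrite muleDr // -EFinM muleC.
  - by move=> x; apply: mu_ge0.
  - exact: mu_sum1.
  - by move=> x t; apply: lam_ge0.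
  - by move=> x; apply: lam_sum1.
rewrite big_split /=; congr (_ + _)%E.
case: J {mu_ge0 mu_sum1 lam_ge0 lam_sum1} => [|J]; first by rewrite !big_geq.
rewrite big_ltn // /= mulr0 add0e.
by apply: eq_big_nat => j /andP[-> _]; rewrite mulrC.
Qed.
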